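(* Let $H$ be a real Hilbert space of infinite dimension and let $Q$ be a complete $\sigma$-finite probability measure on $H$ such that $Q(A)=0$ for every finite dimensional affine subspace $A$ of $H$. Then for every integer $k \geq 1$ and every finite dimensional affine subspace $A$ of $H^k$, we have $Q^{\otimes k}(A)=0$.
   Context: $Q^{\otimes k}$ denotes the $k$-fold product measure of $Q$ on $H^k$. An affine subspace of a vector space is a set of the form $a + V$ with $V$ a vector subspace; it is finite dimensional if $V$ is. *)

From HB Require Import structures.
From mathcomp Require Import all_boot all_order all_algebra.
From mathcomp Require Import all_classical all_reals all_analysis.
Set Implicit Arguments. Unset Strict Implicit. Unset Printing Implicit Defensive.
Import Order.TTheory GRing.Theory Num.Theory.
Local Open Scope classical_set_scope.
Local Open Scope ring_scope.

Section defs.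
Variable R : realType.

Definition fd_affine (V : lmodType R) (A : set V) : Prop :=
  exists (a : V) (n : nat) (v : 'I_n -> V),
    A = [set a + \sum_(i < n) c i *: v i | c in [set: 'I_n -> R]].

Definition lin_indep (V : lmodType R) (n : nat) (v : 'I_n -> V) : Prop :=
  forall c : 'I_n -> R, \sum_(i < n) c i *: v i = 0 -> forall i, c i = 0.

Definition infinite_dim (V : lmodType R) : Prop :=
  forall n : nat, exists v : 'I_n -> V, lin_indep v.

Section inner.
Variables (V : lmodType R) (inner : V -> V -> R).

Definition ip_norm (x : V) : R := Num.sqrt (inner x x).

Definition is_hilbert : Prop :=
  [/\ (forall x y, inner x y = inner y x),
      (forall a x y z, inner (a *: x + y) z = a * inner x z + inner y z),
      (forall x, 0 <= inner x x),
      (forall x, inner x x = 0 -> x = 0) &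
      (forall u : nat -> V,
         (forall e : R, 0 < e -> exists N, forall m n, (N <= m)%N -> (N <= n)%N ->
            ip_norm (u m - u n) < e) ->
         exists l : V, forall e : R, 0 < e -> exists N, forall n, (N <= n)%N ->
            ip_norm (u n - l) < e)].

Definition ip_open (U : set V) : Prop :=
  forall x, U x -> exists2 e : R, 0 < e & forall y, ip_norm (y - x) < e -> U y.
End inner.

(* The measurable space (V, M) for a real vector space V and a family M of
   subsets of V (used with M a sigma-algebra, so that the measurable sets of
   meas_space M are exactly the members of M, as <<s M>> = M). *)
Definition lmod_ptd (V : lmodType R) : Type := V.
HB.instance Definition _ (V : lmodType R) := Choice.on (lmod_ptd V).
HB.instance Definition _ (V : lmodType R) := isPointed.Build (lmod_ptd V) 0.
Definition meas_space (V : lmodType R) (M : set (set V)) :=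
  g_sigma_algebraType (M : set (set (lmod_ptd V))).

(* The k-fold product H^k is k.-tuple H with the product sigma-algebra
   (mathcomp-analysis' instance on tuples).  P is the product measure
   Q^{(x)k} iff it takes the product value on measurable rectangles
   (this determines P uniquely since Q is sigma-finite). *)
Definition is_product_measure d (H : measurableType d) (k : nat)
    (Q : set H -> \bar R) (P : set (k.-tuple H) -> \bar R) : Prop :=
  forall B : 'I_k -> set H, (forall i, measurable (B i)) ->
    P [set t | forall i, B i (tnth t i)] = (\prod_(i < k) Q (B i))%E.

(* identification of a tuple with the corresponding element of the
   vector space {ffun 'I_k -> H} = H^k *)
Definition tuple_vec (T : Type) (k : nat) (t : k.-tuple T) : {ffun 'I_k -> T} :=
  [ffun i => tnth t i].
End defs.

From HB Require Import structures.
From mathcomp Require Import all_boot all_order all_algebra.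
From mathcomp Require Import all_classical all_reals all_analysis.
Set Implicit Arguments.
Unset Strict Implicit.
Unset Printing Implicit Defensive.
Import Order.TTheory GRing.Theory Num.Theory.
Local Open Scope classical_set_scope.
Local Open Scope ring_scope.

(* Coordinate projections are linear, so each projection A_i of an affine
   subspace A of H^k is an affine subspace of H, hence Q-null.  A lies in the
   box A_0 x ... x A_(k-1), whose product measure has the factor Q(A_0) = 0. *)

Section linear_image.
Variable R : realType.

Lemma fd_affine_linear_image (U V : lmodType R) (f : {linear U -> V})
    (A : set U) :
  fd_affine A -> fd_affine (f @` A).
Proof.
move=> [a [n [v ->]]]; exists (f a), n, (f \o v).
apply/seteqP; split => [_ [_ [c _ <-] <-]|_ [c _ <-]].
- exists c => //; rewrite linearD linear_sum.
  by congr (_ + _); apply: eq_bigr => i _; rewrite linearZ.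
- exists (a + \sum_(i < n) c i *: v i); first by exists c.
  rewrite linearD linear_sum.
  by congr (_ + _); apply: eq_bigr => i _; rewrite linearZ.
Qed.

Definition ffun_coord (I : finType) (V : lmodType R) (i : I)
  (x : {ffun I -> V}) : V := x i.

Lemma ffun_coord_is_linear (I : finType) (V : lmodType R) (i : I) :
  linear (@ffun_coord I V i).
Proof. by move=> c x y; rewrite /ffun_coord !ffunE. Qed.

HB.instance Definition _ (I : finType) (V : lmodType R) (i : I) :=
  GRing.isLinear.Build R {ffun I -> V} V *:%R (ffun_coord i)
    (ffun_coord_is_linear i).

End linear_image.

Section null_box.
Context d (T : measurableType d) (R : realType) (k : nat).

Definition tuple_box (B : 'I_k -> set T) : set (k.-tuple T) :=
  [set t | forall i, B i (tnth t i)].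

Lemma measurable_tuple_box (B : 'I_k -> set T) :
  (forall i, measurable (B i)) -> measurable (tuple_box B).
Proof.
move=> mB.
have -> : tuple_box B = \bigcap_(i in [set: 'I_k]) ((tnth (T:=T))^~ i @^-1` B i).
  by apply/seteqP; split => t /= Bt i => [_|]; exact: Bt.
apply: fin_bigcap_measurable; first exact: finite_finset.
move=> i _; rewrite -[X in measurable X]setTI.
exact: measurable_tnth.
Qed.

Lemma product_measure_negligible_box (Q : set T -> \bar R)
    (P : {measure set (k.-tuple T) -> \bar R}) (B : 'I_k -> set T) (i0 : 'I_k) :
  is_product_measure Q P -> (forall i, measurable (B i)) -> Q (B i0) = 0%E ->
  P.-negligible (tuple_box B).
Proof.
move=> HP mB QB0; apply/negligibleP; first exact: measurable_tuple_box.
by rewrite [LHS]HP // (bigD1 i0) //= QB0 mul0e.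
Qed.

End null_box.

Theorem mainTheorem2 (R : realType) (H : lmodType R)
    (inner : H -> H -> R)
    (Hhilb : is_hilbert inner)
    (Hinf : infinite_dim H)
    (M : set (set H))
    (HM : sigma_algebra setT M)
    (Hborel : forall U : set H, ip_open inner U -> M U)
    (Q : probability (meas_space M) R)
    (Qcompl : measure_is_complete Q)
    (Qsfin : sigma_finite setT Q)
    (Qaff : forall A : set H, fd_affine A -> M A /\ Q A = 0%E)
    (k : nat) (hk : (1 <= k)%N)
    (P : {measure set (k.-tuple (meas_space M)) -> \bar R})
    (HP : is_product_measure Q P)
    (A : set {ffun 'I_k -> H}) (HA : fd_affine A) :
  P.-negligible (@tuple_vec H k @^-1` A).
Proof.
pose B i : set (meas_space M) := ffun_coord i @` A.
have fdB i : fd_affine (B i : set H) by exact: fd_affine_linear_image.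
have mB i : measurable (B i) by apply: sub_gen_smallest; exact: (Qaff _ (fdB i)).1.
have := product_measure_negligible_box HP mB (Qaff _ (fdB (Ordinal hk))).2.
apply: negligibleS.
by move=> t At i; exists (tuple_vec t) => //; rewrite /ffun_coord ffunE.
Qed.
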